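(* Let $P_1,P_2,N>0$ and let $\rho_1\in[0,1)$ satisfy $\frac{P_2}{N}\ge\frac{\rho_1^2}{1-\rho_1^2}$. Define $R_1(\rho_1)=\frac12\log\big(1+\frac{P_1(1-\rho_1^2)}{N}\big)$ and $$R_2(\rho_1)=\max_{\rho_2\in[0,1]}\min\Big\{\tfrac12\log\Big(1+\tfrac{P_2(1-\rho_2^2)}{N}\Big),\ \tfrac12\log\Big(\tfrac{P_1+P_2+2\sqrt{P_1P_2}\rho_1\rho_2+N}{P_1(1-\rho_1^2)+N}\Big)\Big\}.$$ Then for every $\epsilon>0$, $(R_1(\rho_1),R_2(\rho_1)+\epsilon)\notin\mathcal R_{\mathrm{CL}}(P_1,P_2,N)$.
   Context: Cover–Leung region: $\mathcal R_{\mathrm{CL}}(P_1,P_2,N)=\bigcup_{\rho_1,\rho_2\in[0,1]}\mathcal R_{\mathrm{CL}}^{(\rho_1,\rho_2)}(P_1,P_2,N)$, where $\mathcal R_{\mathrm{CL}}^{(\rho_1,\rho_2)}(P_1,P_2,N)$ is the set of nonnegative $(R_1,R_2)$ with $R_1\le\frac12\log(1+\frac{P_1(1-\rho_1^2)}{N})$, $R_2\le\frac12\log(1+\frac{P_2(1-\rho_2^2)}{N})$, $R_1+R_2\le\frac12\log(1+\frac{P_1+P_2+2\sqrt{P_1P_2}\rho_1\rho_2}{N})$. *)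

From Stdlib Require Import Reals Lra.
Open Scope R_scope.

(* Logarithm: natural log (the base is irrelevant for the statement). *)
Definition half_log (x : R) : R := / 2 * ln x.

Definition R_CL_rho (P1 P2 N rho1 rho2 R1 R2 : R) : Prop :=
  0 <= R1 /\ 0 <= R2 /\
  R1 <= half_log (1 + P1 * (1 - rho1 ^ 2) / N) /\
  R2 <= half_log (1 + P2 * (1 - rho2 ^ 2) / N) /\
  R1 + R2 <= half_log (1 + (P1 + P2 + 2 * sqrt (P1 * P2) * rho1 * rho2) / N).

Definition R_CL (P1 P2 N R1 R2 : R) : Prop :=
  exists rho1 rho2, 0 <= rho1 <= 1 /\ 0 <= rho2 <= 1 /\
    R_CL_rho P1 P2 N rho1 rho2 R1 R2.

Definition R1_of (P1 N rho1 : R) : R :=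
  half_log (1 + P1 * (1 - rho1 ^ 2) / N).

Definition R2_obj (P1 P2 N rho1 rho2 : R) : R :=
  Rmin (half_log (1 + P2 * (1 - rho2 ^ 2) / N))
       (half_log ((P1 + P2 + 2 * sqrt (P1 * P2) * rho1 * rho2 + N)
                  / (P1 * (1 - rho1 ^ 2) + N))).

Definition is_max_on_01 (f : R -> R) (m : R) : Prop :=
  (exists x, 0 <= x <= 1 /\ f x = m) /\ (forall x, 0 <= x <= 1 -> f x <= m).

From Stdlib Require Import Reals Lra Psatz.
Open Scope R_scope.

(* Suppose (R1(rho1), R2 + eps) lies in the Cover-Leung region,
   witnessed by correlation parameters (r1, r2) in [0,1]^2.
   1. The individual constraint R1(rho1) <= 1/2 log(1 + P1 (1 - r1^2)/N)
      forces r1 <= rho1, because 1/2 log(1 + P1 (1 - r^2)/N) is strictly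
      decreasing in r on [0,1].
   2. The sum-rate bound is nondecreasing in r1, so it may be evaluated at
      rho1; subtracting R1(rho1) and writing the difference of logarithms as
      the logarithm of a quotient shows that R2 + eps is at most the second
      term of the objective R2_obj rho1 r2.
   3. Together with the individual bound on the second rate this gives
      R2 + eps <= R2_obj rho1 r2 <= R2, contradicting eps > 0. *)

Lemma half_log_le (a b : R) : 0 < a -> a <= b -> half_log a <= half_log b.
Proof.
  intros Ha Hab; unfold half_log; apply Rmult_le_compat_l; [lra|].
  destruct (Req_dec a b) as [-> | Hne]; [lra|].
  left; apply ln_increasing; lra.
Qed.

Lemma half_log_lt (a b : R) : 0 < a -> a < b -> half_log a < half_log b.
Proof.
  intros Ha Hab; unfold half_log; apply Rmult_lt_compat_l; [lra|].
  now apply ln_increasing.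
Qed.

Lemma half_log_div (a b : R) :
  0 < a -> 0 < b -> half_log (a / b) = half_log a - half_log b.
Proof.
  intros Ha Hb; unfold half_log, Rdiv.
  rewrite ln_mult, ln_Rinv by (try apply Rinv_0_lt_compat; lra); ring.
Qed.

(* Step 1: the single-user rate R1_of is strictly decreasing in the
   correlation, so achieving R1_of rho1 with correlation r1 needs r1 <= rho1. *)
Lemma R1_of_forces_le (P1 N r1 rho1 : R) :
  0 < P1 -> 0 < N -> 0 <= rho1 -> r1 <= 1 ->
  R1_of P1 N rho1 <= half_log (1 + P1 * (1 - r1 ^ 2) / N) -> r1 <= rho1.
Proof.
  intros HP1 HN Hrho Hr1 Hle.
  destruct (Rle_or_lt r1 rho1) as [Hlt | Hgt]; [exact Hlt|]. exfalso.
  assert (Hdecr : half_log (1 + P1 * (1 - r1 ^ 2) / N) < R1_of P1 N rho1).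
  { unfold R1_of; apply half_log_lt.
    - assert (0 <= P1 * (1 - r1 ^ 2) / N); [|lra].
      apply Rle_mult_inv_pos; [apply Rmult_le_pos|]; nra.
    - apply Rplus_lt_compat_l, Rmult_lt_compat_r; [now apply Rinv_0_lt_compat|].
      apply Rmult_lt_compat_l; nra. }
  lra.
Qed.

Lemma sum_rate_bound_R2 (P1 P2 N rho1 r1 r2 R2' : R) :
  0 < P1 -> 0 < P2 -> 0 < N -> 0 <= r1 <= rho1 -> rho1 < 1 -> 0 <= r2 ->
  R1_of P1 N rho1 + R2' <=
    half_log (1 + (P1 + P2 + 2 * sqrt (P1 * P2) * r1 * r2) / N) ->
  R2' <= half_log ((P1 + P2 + 2 * sqrt (P1 * P2) * rho1 * r2 + N)
                   / (P1 * (1 - rho1 ^ 2) + N)).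
Proof.
  intros HP1 HP2 HN Hr1 Hrho Hr2 Hsum.
  set (s := sqrt (P1 * P2)) in *.
  assert (Hs : 0 <= s) by apply sqrt_pos.
  assert (Hcorr : 0 <= s * r1 * r2 <= s * rho1 * r2).
  { split; [apply Rmult_le_pos; [apply Rmult_le_pos|]; lra|].
    apply Rmult_le_compat_r; [lra|]; apply Rmult_le_compat_l; lra. }
  assert (Hsum_mono :
    half_log (1 + (P1 + P2 + 2 * s * r1 * r2) / N) <=
    half_log (1 + (P1 + P2 + 2 * s * rho1 * r2) / N)).
  { apply half_log_le.
    - assert (0 <= (P1 + P2 + 2 * s * r1 * r2) / N); [|lra].
      apply Rle_mult_inv_pos; lra.
    - apply Rplus_le_compat_l, Rmult_le_compat_r;
        [left; now apply Rinv_0_lt_compat | lra]. }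
  assert (HB : 0 <= P1 * (1 - rho1 ^ 2)) by (apply Rmult_le_pos; nra).
  assert (Hquot :
    half_log ((P1 + P2 + 2 * s * rho1 * r2 + N) / (P1 * (1 - rho1 ^ 2) + N)) =
    half_log (1 + (P1 + P2 + 2 * s * rho1 * r2) / N) - R1_of P1 N rho1).
  { unfold R1_of; rewrite <- half_log_div.
    - f_equal; field; lra.
    - assert (0 <= (P1 + P2 + 2 * s * rho1 * r2) / N); [|lra].
      apply Rle_mult_inv_pos; lra.
    - assert (0 <= P1 * (1 - rho1 ^ 2) / N); [|lra].
      apply Rle_mult_inv_pos; lra. }
  rewrite Hquot; lra.
Qed.

Theorem mainTheorem12 (P1 P2 N rho1 R2 : R) :
  0 < P1 -> 0 < P2 -> 0 < N ->
  0 <= rho1 < 1 ->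
  P2 / N >= rho1 ^ 2 / (1 - rho1 ^ 2) ->
  is_max_on_01 (R2_obj P1 P2 N rho1) R2 ->
  forall eps : R, 0 < eps ->
  ~ R_CL P1 P2 N (R1_of P1 N rho1) (R2 + eps).
Proof.
  intros HP1 HP2 HN Hrho _ [_ Hmax] eps Heps
    [r1 [r2 [Hr1 [Hr2 [_ [_ [Hrate1 [Hrate2 Hsum]]]]]]]].
  assert (Hr1le : r1 <= rho1)
    by (apply (R1_of_forces_le P1 N r1 rho1); tauto).
  assert (Hobj : R2 + eps <= R2_obj P1 P2 N rho1 r2).
  { apply Rmin_glb; [exact Hrate2|].
    apply (sum_rate_bound_R2 P1 P2 N rho1 r1); lra. }
  specialize (Hmax r2 Hr2); lra.
Qed.
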